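(* For every positive integer $s$ there exist infinitely many (pairwise non-isomorphic) connected, essentially 2-edge connected graphs $G$ such that the graph obtained from $G$ by deleting all of its leaves is 2-connected, and $G^2$ has no $[2,2s]$-factor.
   Context: All graphs are finite, simple and undirected. The square $G^2$ of a graph $G$ is the graph on $V(G)$ in which two distinct vertices are adjacent iff their distance in $G$ is at most 2. A factor of $G$ is a spanning subgraph. A connected even factor is a connected factor in which every vertex has positive even degree. For a positive integer $s$, a $[2,2s]$-factor of $G$ is a connected even factor of $G$ in which every vertex has degree at most $2s$. A graph is essentially 2-edge connected if deleting fewer than 2 edges cannot result in (a graph with) two nontrivial components, i.e. components with at least one edge. A leaf is a vertex of degree 1. *)

From mathcomp Require Import all_boot.
Set Implicit Arguments. Unset Strict Implicit. Unset Printing Implicit Defensive.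

Section Graphs.
Variable T : finType.

Definition simple_graph (e : rel T) : Prop := symmetric e /\ irreflexive e.

Definition deg (e : rel T) (x : T) : nat := #|[set y | e x y]|.

Definition leaf (e : rel T) (x : T) : bool := deg e x == 1.

Definition induced (A : pred T) (e : rel T) : rel T :=
  fun x y => [&& e x y, x \in A & y \in A].

Definition connected_on (A : pred T) (e : rel T) : Prop :=
  forall x y, x \in A -> y \in A -> connect (induced A e) x y.

Definition connected (e : rel T) : Prop := 0 < #|T| /\ forall x y : T, connect e x y.

Definition two_connected_on (A : pred T) (e : rel T) : Prop :=
  2 < #|A| /\ connected_on A e /\
  forall v, v \in A -> connected_on [pred x | (x \in A) && (x != v)] e.

Definition two_nontrivial_components (e : rel T) : Prop :=
  exists x y, [/\ 0 < deg e x, 0 < deg e y & ~~ connect e x y].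

Definition del_edge (e : rel T) (u v : T) : rel T :=
  fun x y => e x y && ~~ (((x == u) && (y == v)) || ((x == v) && (y == u))).

Definition ess_2_edge_connected (e : rel T) : Prop :=
  ~ two_nontrivial_components e /\
  forall u v, e u v -> ~ two_nontrivial_components (del_edge e u v).

Definition gsquare (e : rel T) : rel T :=
  fun x y => (x != y) && (e x y || [exists z, e x z && e z y]).

Definition factor (H F : rel T) : Prop :=
  simple_graph F /\ subrel F H.

Definition two_2s_factor (s : nat) (H F : rel T) : Prop :=
  factor H F /\ connected F /\
  forall x, [&& 0 < deg F x, ~~ odd (deg F x) & deg F x <= 2 * s].

End Graphs.

From mathcomp Require Import all_boot zify.
Set Implicit Arguments. Unset Strict Implicit. Unset Printing Implicit Defensive.

(* Let G be K_{2,m}, with hubs [hub true], [hub false] and other side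
   [mid i], plus a pendant vertex [pend i] attached to each [mid i].  The
   leaves are the [pend i] and deleting them leaves the 2-connected K_{2,m};
   after deleting any one edge some hub is still adjacent to every [mid i],
   so all remaining edges lie in its component.  In G^2 the only neighbours
   of [pend i] are the two hubs and [mid i], so a factor of minimum degree 2
   joins every [pend i] to a hub: m <= deg (hub true) + deg (hub false) <= 4s,
   which is impossible once m > 4s. *)

Section GraphFacts.
Variable T : finType.
Implicit Types (e : rel T) (A : pred T).

Lemma two_neighbours_nonleaf e x y z : y != z -> e x y -> e x z -> ~~ leaf e x.
Proof.
move=> neq_yz exy exz; rewrite /leaf gtn_eqF //.
have <- : #|[set y; z]| = 2 by rewrite cards2 neq_yz.
by apply/subset_leq_card/subsetP=> w; rewrite !inE => /orP[]/eqP->.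
Qed.

Lemma neighbour_of_deg_gt0 e x : 0 < deg e x -> exists y, e x y.
Proof. by rewrite /deg card_gt0 => /set0Pn[y]; rewrite inE; exists y. Qed.

Lemma card_preim_neighbours (I : finType) (f : I -> T) e x :
  injective f -> #|[set i | e x (f i)]| <= deg e x.
Proof.
move=> inj_f; rewrite /deg -(card_imset _ inj_f).
by apply: subset_leq_card; apply/subsetP=> _ /imsetP[i + ->]; rewrite !inE.
Qed.

Lemma card_gt2 A x y z :
  x != y -> x != z -> y != z -> x \in A -> y \in A -> z \in A -> 2 < #|A|.
Proof.
move=> nxy nxz nyz Ax Ay Az.
have <- : #|[set x; y; z]| = 3 by rewrite -setUA cardsU1 cards2 nyz !inE negb_or nxy nxz.
by apply: subset_leq_card; apply/subsetP=> w; rewrite !inE => /orP[/orP[]|]/eqP->.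
Qed.

Lemma induced_sym A e : symmetric e -> symmetric (induced A e).
Proof. by move=> sym_e x y; rewrite /induced sym_e [(y \in A) && _]andbC. Qed.

Lemma star_connected_on e A c : symmetric e ->
  (forall x, x \in A -> connect (induced A e) x c) -> connected_on A e.
Proof.
move=> sym_e to_c x y Ax Ay; apply: connect_trans (to_c x Ax) _.
by rewrite (sym_connect_sym (induced_sym A sym_e)) to_c.
Qed.

Lemma del_edge_sym e u v : symmetric e -> symmetric (del_edge e u v).
Proof.
move=> sym_e x y; rewrite /del_edge sym_e; congr (_ && ~~ _).
by rewrite orbC andbC [X in _ || X]andbC.
Qed.

Lemma del_edgeEr e u v x y : y \notin [:: u; v] -> del_edge e u v x y = e x y.
Proof. by rewrite !inE negb_or /del_edge => /andP[/negbTE-> /negbTE->]; rewrite !andbF andbT. Qed.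

Lemma no_two_nontrivial_components e c : symmetric e ->
  (forall x y, e x y -> connect e x c) -> ~ two_nontrivial_components e.
Proof.
move=> sym_e to_c [x [y [/neighbour_of_deg_gt0[x' exx'] /neighbour_of_deg_gt0[y' eyy']]]].
by rewrite (connect_trans (to_c _ _ exx')) // (sym_connect_sym sym_e) (to_c _ _ eyy').
Qed.

End GraphFacts.

Notation hub t := (inl t).
Notation mid i := (inr (i, false)).
Notation pend i := (inr (i, true)).

Section PendantK2m.
Variable m : nat.

Definition pendK2_vertex : finType := (bool + 'I_m * bool)%type.

Definition pendK2 : rel pendK2_vertex := fun x y =>
  match x, y with
  | hub _, mid _ | mid _, hub _ => true
  | mid i, pend j | pend i, mid j => i == j
  | _, _ => false
  end.

Lemma pendK2_sym : symmetric pendK2.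
Proof. by move=> [x|[i []]] [y|[j []]] //=; rewrite eq_sym. Qed.

Lemma pendK2_irr : irreflexive pendK2.
Proof. by move=> [x|[i []]]. Qed.

Lemma card_pendK2_vertex : #|pendK2_vertex| = 2 + 2 * m.
Proof. by rewrite card_sum card_prod card_ord card_bool mulnC. Qed.

Lemma gsquare_pend i y :
  gsquare pendK2 (pend i) y -> y \in [:: hub true; hub false; mid i].
Proof.
rewrite !inE => /andP[neq /orP[|/existsP[z /andP[]]]].
  by case: y neq => [[]|[j []]] //= _ /eqP->; rewrite eqxx.
case: z => [t|[j []]] //= /eqP <-.
by case: y neq => [[]|[j' []]] //= neq /eqP eq_ij'; rewrite eq_ij' eqxx in neq.
Qed.

Lemma factor_pend_hub F i : subrel F (gsquare pendK2) ->
  1 < deg F (pend i) -> exists t, F (pend i) (hub t).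
Proof.
move=> sub_F deg_i.
case: (boolP (F (pend i) (hub true))) => [|Fa]; first by exists true.
case: (boolP (F (pend i) (hub false))) => [|Fb]; first by exists false.
suff : deg F (pend i) <= 1 by rewrite leqNgt deg_i.
rewrite -(cards1 (mid i : pendK2_vertex)); apply: subset_leq_card.
apply/subsetP=> y; rewrite !inE => Fy.
have := gsquare_pend (sub_F _ _ Fy); rewrite !inE.
by case/or3P=> /eqP y_eq; subst y; rewrite ?eqxx // ?Fy in Fa Fb.
Qed.

Lemma m_le_deg_hubs F : symmetric F -> subrel F (gsquare pendK2) ->
  (forall x, 1 < deg F x) -> m <= deg F (hub true) + deg F (hub false).
Proof.
move=> sym_F sub_F min_deg.
have inj_pend : injective (fun i : 'I_m => pend i : pendK2_vertex) by move=> i j [].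
apply: leq_trans (leq_add (card_preim_neighbours F (hub true) inj_pend)
                          (card_preim_neighbours F (hub false) inj_pend)).
rewrite -[m in m <= _]card_ord -cardsT; apply: leq_trans (leq_card_setU _ _).
apply/subset_leq_card/subsetP=> i _; rewrite !inE !(sym_F (hub _)).
by have [[] ->] := factor_pend_hub sub_F (min_deg (pend i)); rewrite ?orbT.
Qed.

Lemma no_2s_factor s : 4 * s < m -> ~ exists F, two_2s_factor s (gsquare pendK2) F.
Proof.
move=> m_big [F [[[sym_F _] sub_F] [_ deg_F]]].
have min_deg x : 1 < deg F x by case/and3P: (deg_F x); case: (deg F x) => [|[]].
have max_deg x : deg F x <= 2 * s by case/and3P: (deg_F x).
have := leq_trans (m_le_deg_hubs sym_F sub_F min_deg) (leq_add (max_deg _) (max_deg _)).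
by rewrite -mulnDl leqNgt m_big.
Qed.

Hypothesis m_gt1 : 1 < m.
Let i0 : 'I_m := Ordinal (ltnW m_gt1).

Lemma exists_other_index (i : 'I_m) : exists j, j != i.
Proof.
case: (eqVneq i i0) => [->|ne_i0]; last by exists i0; rewrite eq_sym.
by exists (Ordinal m_gt1).
Qed.

Lemma leaf_pendK2 x : leaf pendK2 x = if x is pend _ then true else false.
Proof.
case: x => [t|[i []]].
- have [j ne_j0] := exists_other_index i0.
  apply/negbTE/(two_neighbours_nonleaf (y := mid j) (z := mid i0)) => //.
  by apply: contra ne_j0 => /eqP[->].
- have adj_pend : [set y | pendK2 (pend i) y] = [set mid i].
    apply/setP=> y; rewrite !inE.
    by case: y => [t|[j []]] //=; apply/idP/eqP => // [/eqP->|[->]].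
  by rewrite /leaf /deg adj_pend cards1.
- exact/negbTE/(two_neighbours_nonleaf (y := hub true) (z := hub false)).
Qed.

Lemma induced_connect_hub (A : pred pendK2_vertex) t j :
  hub t \in A -> mid j \in A -> (forall i, pend i \notin A) ->
  forall x, x \in A -> connect (induced A pendK2) x (hub t).
Proof.
move=> At Aj noA [t'|[i []]] Ax.
- case: (eqVneq t' t) => [->|_]; first exact: connect0.
  by apply: (@connect_trans _ _ (mid j)); apply: connect1; rewrite /induced /= ?Ax ?Aj ?At.
- by rewrite (negbTE (noA i)) in Ax.
- by apply: connect1; rewrite /induced /= Ax At.
Qed.

Lemma two_connected_pendK2 : two_connected_on [pred x | ~~ leaf pendK2 x] pendK2.
Proof.
split.
  by apply: (card_gt2 (x := hub true) (y := hub false) (z := mid i0));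
    rewrite ?inE ?leaf_pendK2.
split.
  apply: (star_connected_on (c := hub true) pendK2_sym).
  by apply: (induced_connect_hub (j := i0)) => *; rewrite inE leaf_pendK2.
move=> v; rewrite inE leaf_pendK2.
case: v => [t|[i []]] // _; apply: star_connected_on pendK2_sym _.
- by apply: (induced_connect_hub (t := ~~ t) (j := i0)) => *;
    rewrite !inE leaf_pendK2 //=; case: t.
have [j ne_ji] := exists_other_index i.
apply: (induced_connect_hub (t := true) (j := j)) => *; rewrite !inE leaf_pendK2 //=.
by apply: contra ne_ji => /eqP[->].
Qed.

Lemma edge_avoids_hub u v : pendK2 u v -> exists t, hub t \notin [:: u; v].
Proof.
case: u => [t|[i []]]; case: v => [t'|[j []]] //= _;
  by [exists true | exists (~~ t); case: t | exists (~~ t'); case: t'].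
Qed.

Lemma edge_avoids_mid u v : pendK2 u v -> exists j, mid j \notin [:: u; v].
Proof.
case: u => [t|[i []]]; case: v => [t'|[j []]] //= _;
  [ have [k ne_k] := exists_other_index j | have [k ne_k] := exists_other_index j
  | have [k ne_k] := exists_other_index i | have [k ne_k] := exists_other_index i];
  by exists k; apply/negP; rewrite !inE => /orP[]/eqP[] // eq_k; rewrite eq_k eqxx in ne_k.
Qed.

Lemma del_edge_connect_hub u v t j :
  hub t \notin [:: u; v] -> mid j \notin [:: u; v] ->
  forall x y, del_edge pendK2 u v x y -> connect (del_edge pendK2 u v) x (hub t).
Proof.
move=> t_uv j_uv x y exy.
have mid_hub i : del_edge pendK2 u v (mid i) (hub t) by rewrite del_edgeEr.
case: x exy => [t'|[i []]] exy.
- case: (eqVneq t' t) => [->|_]; first exact: connect0.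
  apply: (@connect_trans _ _ (mid j)); apply: connect1; last exact: mid_hub.
  by rewrite del_edgeEr.
- have /andP[+ _] := exy; case: y exy => [|[i' []]] //= exy /eqP eq_ii'; subst i'.
  by apply: (@connect_trans _ _ (mid i)); apply: connect1; last exact: mid_hub.
- exact/connect1/mid_hub.
Qed.

Lemma connect_pendK2_hub x : connect pendK2 x (hub true).
Proof.
case: x => [[]|[i []]].
- exact: connect0.
- by apply: (@connect_trans _ _ (mid i0)); apply: connect1.
- by apply: (@connect_trans _ _ (mid i)); apply: connect1; rewrite /= ?eqxx.
- exact: connect1.
Qed.

Lemma connected_pendK2 : connected pendK2.
Proof.
split; first by rewrite card_pendK2_vertex.
move=> x y; apply: connect_trans (connect_pendK2_hub x) _.
by rewrite (sym_connect_sym pendK2_sym) connect_pendK2_hub.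
Qed.

Lemma ess_2_edge_connected_pendK2 : ess_2_edge_connected pendK2.
Proof.
split=> [|u v euv].
  by apply: (no_two_nontrivial_components (c := hub true) pendK2_sym) => x y _;
    apply: connect_pendK2_hub.
have [t t_uv] := edge_avoids_hub euv; have [j j_uv] := edge_avoids_mid euv.
exact: no_two_nontrivial_components (del_edge_sym u v pendK2_sym)
                                    (del_edge_connect_hub t_uv j_uv).
Qed.

End PendantK2m.

Unset Implicit Arguments.

Theorem theorem4 (s : nat) (hs : 0 < s) (n : nat) :
  exists (T : finType) (e : rel T),
    simple_graph e /\ n <= #|T| /\ connected e /\ ess_2_edge_connected e /\
    two_connected_on [pred x | ~~ leaf e x] e /\
    ~ (exists F : rel T, two_2s_factor s (gsquare e) F).
Proof.
pose m := (n + 4 * s).+2.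
have m_gt1 : 1 < m by [].
exists (pendK2_vertex m), (pendK2 (m := m)).
split; first exact: (conj (@pendK2_sym m) (@pendK2_irr m)).
split; first by rewrite card_pendK2_vertex /m; lia.
split; first exact: connected_pendK2 m_gt1.
split; first exact: ess_2_edge_connected_pendK2 m_gt1.
split; first exact: two_connected_pendK2 m_gt1.
by apply: no_2s_factor; rewrite /m; lia.
Qed.
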